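(* Assume $p_0\in(0,1)$, $p_j\in(0,1)$ and $\tau_j=\frac{p_0}{p_0+2(1-p_0)p_j}$ for $j=1,\dots,k$. Then for every $\Theta\in\mathbb R^{nd}$, $$\mathbb E_\xi\|G(\Theta)-G(\hat\Theta)\|^2\le 2\mathcal L\,\big(F(\Theta)-F(\hat\Theta)\big),$$ where both oracles use the same realization of $\xi$.
   Context: Clients $1,\dots,n$ are partitioned into nonempty disjoint clusters $\mathcal I_1,\dots,\mathcal I_k$; $d\ge1$. Each $f_i:\mathbb R^d\to\mathbb R$ is differentiable, $\mu$-strongly convex and $L$-smooth ($0<\mu\le L$). Fix $\gamma_i>0$ and $\alpha_j\in[0,1]$, not all $\alpha_j=0$. For $\Theta=(\theta_1,\dots,\theta_n)$ define $\bar\theta_j=\frac{\sum_{i\in\mathcal I_j}\gamma_i\theta_i}{\sum_{i\in\mathcal I_j}\gamma_i}$, $\bar\theta=\frac{\sum_{j}\sum_{i\in\mathcal I_j}\alpha_j\gamma_i\theta_i}{\sum_{j}\sum_{i\in\mathcal I_j}\alpha_j\gamma_i}$ and $F(\Theta)=\sum_{j}\sum_{i\in\mathcal I_j}\big(f_i(\theta_i)+\frac{(1-\alpha_j)\gamma_i}{2}\|\theta_i-\bar\theta_j\|^2+\frac{\alpha_j\gamma_i}{2}\|\theta_i-\bar\theta\|^2\big)$; $\hat\Theta$ is its unique minimizer. Gradient oracle: $\xi=(\xi_0,\dots,\xi_k)$ independent Bernoulli with $\mathbb P(\xi_j=1)=p_j$; $G(\Theta)=(G_1,\dots,G_n)$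 with, for $i\in\mathcal I_j$: $G_i=\frac{\gamma_i\alpha_j}{p_0}(\theta_i-\bar\theta)+\frac{\gamma_i\tau_j(1-\alpha_j)}{p_0}(\theta_i-\bar\theta_j)$ if $\xi_0=1$; $G_i=\frac{\gamma_i(1-\tau_j)(1-\alpha_j)}{(1-p_0)p_j}(\theta_i-\bar\theta_j)$ if $\xi_0=0,\xi_j=1$; $G_i=\frac{1}{(1-p_0)(1-p_j)}\nabla f_i(\theta_i)$ if $\xi_0=\xi_j=0$. Define $$\mathcal L=\max\Big\{\frac{2}{p_0}\max_{j}\max_{i\in\mathcal I_j}\alpha_j\gamma_i,\ \max_{j}\frac{2(1-\alpha_j)\max_{i\in\mathcal I_j}\gamma_i}{p_0+2(1-p_0)p_j},\ \frac{L}{1-p_0}\max_{j}\frac{1}{1-p_j}\Big\}.$$ *)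

From HB Require Import structures.
From mathcomp Require Import all_boot all_order all_algebra.
From mathcomp Require Import all_classical all_reals all_analysis.
Set Implicit Arguments. Unset Strict Implicit. Unset Printing Implicit Defensive.
Import Order.TTheory GRing.Theory Num.Theory.
Import numFieldNormedType.Exports.
Local Open Scope ring_scope.

Section Defs.
Variables (R : realType) (d : nat).

Definition sqnorm (v : 'rV[R]_d) : R := \sum_(j < d) (v 0 j) ^+ 2.
Definition enorm (v : 'rV[R]_d) : R := Num.sqrt (sqnorm v).

Definition grad (f : 'rV[R]_d -> R) (x : 'rV[R]_d) : 'rV[R]_d :=
  \row_(j < d) ('d f x (delta_mx 0 j : 'rV[R]_d)).

Definition strongly_convex (mu : R) (f : 'rV[R]_d -> R) : Prop :=
  forall (x y : 'rV[R]_d) (t : R), 0 <= t <= 1 ->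
    f (t *: x + (1 - t) *: y) <=
      t * f x + (1 - t) * f y - mu / 2 * t * (1 - t) * sqnorm (x - y).

Definition smooth (L : R) (f : 'rV[R]_d -> R) : Prop :=
  (forall x, differentiable f x) /\
  (forall x y, enorm (grad f x - grad f y) <= L * enorm (x - y)).

Variables (n k : nat) (c : 'I_n -> 'I_k) (gamma : 'I_n -> R) (alpha : 'I_k -> R).

Definition cluster_mean (Th : 'I_n -> 'rV[R]_d) (j : 'I_k) : 'rV[R]_d :=
  (\sum_(i < n | c i == j) gamma i)^-1 *: \sum_(i < n | c i == j) gamma i *: Th i.

Definition global_mean (Th : 'I_n -> 'rV[R]_d) : 'rV[R]_d :=
  (\sum_(i < n) alpha (c i) * gamma i)^-1 *:
    \sum_(i < n) (alpha (c i) * gamma i) *: Th i.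

Definition objF (f : 'I_n -> 'rV[R]_d -> R) (Th : 'I_n -> 'rV[R]_d) : R :=
  \sum_(i < n) (f i (Th i)
     + (1 - alpha (c i)) * gamma i / 2 * sqnorm (Th i - cluster_mean Th (c i))
     + alpha (c i) * gamma i / 2 * sqnorm (Th i - global_mean Th)).

Variables (p0 : R) (p tau : 'I_k -> R).

Definition oracle (f : 'I_n -> 'rV[R]_d -> R) (xi0 : bool) (xis : {ffun 'I_k -> bool})
    (Th : 'I_n -> 'rV[R]_d) (i : 'I_n) : 'rV[R]_d :=
  let j := c i in
  if xi0 then
    (gamma i * alpha j / p0) *: (Th i - global_mean Th)
    + (gamma i * tau j * (1 - alpha j) / p0) *: (Th i - cluster_mean Th j)
  else if xis j then
    (gamma i * (1 - tau j) * (1 - alpha j) / ((1 - p0) * p j)) *: (Th i - cluster_mean Th j)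
  else
    ((1 - p0) * (1 - p j))^-1 *: grad (f i) (Th i).

Definition xi_prob (xi0 : bool) (xis : {ffun 'I_k -> bool}) : R :=
  (if xi0 then p0 else 1 - p0) * \prod_(j < k) (if xis j then p j else 1 - p j).

Definition expected_sqdiff (f : 'I_n -> 'rV[R]_d -> R) (Th Th' : 'I_n -> 'rV[R]_d) : R :=
  \sum_(xi0 : bool) \sum_(xis : {ffun 'I_k -> bool})
    xi_prob xi0 xis *
      \sum_(i < n) sqnorm (oracle f xi0 xis Th i - oracle f xi0 xis Th' i).

Definition calL (L : R) : R :=
  Num.max (Num.max
    (2 / p0 * \big[Num.max/0]_(i < n) (alpha (c i) * gamma i))
    (\big[Num.max/0]_(j < k)
        (2 * (1 - alpha j) * \big[Num.max/0]_(i < n | c i == j) gamma i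
          / (p0 + 2 * (1 - p0) * p j))))
    (L / (1 - p0) * \big[Num.max/0]_(j < k) (1 - p j)^-1).

End Defs.

(* Conditioning first on xi_0 and then on xi_(c i), the expected squared difference of the
   two oracles splits into one term per client, built from |w_i|^2, |u_i|^2 and
   |grad f_i(theta_i) - grad f_i(hat theta_i)|^2, where u_i and w_i are the changes of
   theta_i - bar theta_(c i) and theta_i - bar theta between hat Theta and Theta.  For the
   given tau_j each term is at most 2 calL times the client gap
   |grad f_i(theta_i) - grad f_i(hat theta_i)|^2 / (2L) + (1 - alpha) gamma_i / 2 |u_i|^2
   + alpha gamma_i / 2 |w_i|^2.
   Since the means are linear in Theta, the penalty part of F is an exact quadratic, so
   cocoercivity of the smooth convex f_i gives F(Theta) - F(hat Theta) >= sum of the client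
   gaps + the slope of F at hat Theta towards Theta, and that slope is nonnegative because
   hat Theta minimises F. *)

From HB Require Import structures.
From mathcomp Require Import all_boot all_order all_algebra.
From mathcomp Require Import all_classical all_reals all_analysis.
Import Order.TTheory GRing.Theory Num.Theory.
Import numFieldNormedType.Exports.
From mathcomp Require Import ring lra.
Local Open Scope ring_scope.

Section EuclideanRow.
Context {R : realType} {d : nat}.
Implicit Types (a b g v : 'rV[R]_d).

Definition dot a b : R := \sum_(j < d) a 0 j * b 0 j.

Lemma dotC a b : dot a b = dot b a.
Proof. by apply: eq_bigr => j _; rewrite mulrC. Qed.

Lemma dotDl a b g : dot (a + b) g = dot a g + dot b g.
Proof. by rewrite /dot -big_split; apply: eq_bigr => j _; rewrite !mxE mulrDl. Qed.

Lemma dotZl (s : R) a b : dot (s *: a) b = s * dot a b.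
Proof. by rewrite /dot mulr_sumr; apply: eq_bigr => j _; rewrite !mxE mulrA. Qed.

Lemma dotNl a b : dot (- a) b = - dot a b.
Proof. by rewrite -scaleN1r dotZl mulN1r. Qed.

Lemma dotBl a b g : dot (a - b) g = dot a g - dot b g.
Proof. by rewrite dotDl dotNl. Qed.

Lemma dotZr (s : R) a b : dot a (s *: b) = s * dot a b.
Proof. by rewrite dotC dotZl dotC. Qed.

Lemma dotBr a b g : dot a (b - g) = dot a b - dot a g.
Proof. by rewrite dotC dotBl !(dotC a). Qed.

Lemma sqnorm_dot a : sqnorm a = dot a a.
Proof. by apply: eq_bigr => j _; rewrite expr2. Qed.

Lemma sqnorm_ge0 a : 0 <= sqnorm a.
Proof. by apply: sumr_ge0 => j _; exact: sqr_ge0. Qed.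

Lemma sqnormZ (s : R) a : sqnorm (s *: a) = s ^+ 2 * sqnorm a.
Proof. by rewrite !sqnorm_dot dotZl dotZr mulrA expr2. Qed.

Lemma sqnormD a b : sqnorm (a + b) = sqnorm a + 2 * dot a b + sqnorm b.
Proof.
rewrite /sqnorm /dot mulr_sumr -!big_split /=.
by apply: eq_bigr => j _; rewrite !mxE; ring.
Qed.

Lemma sqnormB a b : sqnorm (a - b) = sqnorm a - 2 * dot a b + sqnorm b.
Proof. rewrite sqnormD dotC -scaleN1r sqnormZ dotZl dotC; ring. Qed.

Lemma sqnormD_le a b : sqnorm (a + b) <= 2 * sqnorm a + 2 * sqnorm b.
Proof. have := sqnorm_ge0 (a - b); rewrite sqnormB sqnormD; lra. Qed.

(* From [0 <= |g - K v|^2]: [2 K <g, v> <= |g|^2 + K^2 |v|^2 <= 2 K^2 |v|^2]. *)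
Lemma dot_le_of_sqnorm g v (K : R) : 0 < K ->
  sqnorm g <= K ^+ 2 * sqnorm v -> dot g v <= K * sqnorm v.
Proof.
move=> K0 hg; rewrite -(ler_pM2l K0) mulrA -expr2.
have := sqnorm_ge0 (g - K *: v); rewrite sqnormB sqnormZ dotZr; lra.
Qed.

Lemma sqnorm_le_of_enorm {a b} {K : R} : 0 <= K ->
  enorm a <= K * enorm b -> sqnorm a <= K ^+ 2 * sqnorm b.
Proof.
move=> K0 hab; rewrite -[sqnorm a]sqr_sqrtr ?sqnorm_ge0 // -[sqnorm b]sqr_sqrtr ?sqnorm_ge0 //.
by rewrite -exprMn ler_sqr ?nnegrE ?mulr_ge0 ?sqrtr_ge0.
Qed.

End EuclideanRow.

Section SmoothConvex.
Context {R : realType} {d : nat}.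
Implicit Types (f : 'rV[R]_d -> R) (x y v : 'rV[R]_d).

Lemma diff_grad f x v : 'd f x v = dot (grad f x) v.
Proof.
rewrite {1}(row_sum_delta v) linear_sum; apply: eq_bigr => j _.
by rewrite linearZ /= mxE mulrC.
Qed.

Lemma is_derive_line f x v t : differentiable f (t *: v + x) ->
  is_derive t 1 (fun s => f (s *: v + x)) ('d f (t *: v + x) v).
Proof.
move=> df.
have quotE : (fun h : R => h^-1 *: (((fun s => f (s *: v + x)) \o shift t) (h *: 1)
           - f (t *: v + x))) =
         (fun h => h^-1 *: ((f \o shift (t *: v + x)) (h *: v) - f (t *: v + x))).
  by apply/funext => h /=; rewrite /shift /= [h *: 1]mulr1 scalerDl addrA.
split; first by rewrite /derivable quotE; exact: diff_derivable.
transitivity ('D_v f (t *: v + x)); first by rewrite /derive quotE.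
exact: deriveE.
Qed.

(* Mean value theorem for [s |-> f (x + s (y - x)) - s <grad f x, y - x> - s^2 L/2 |y - x|^2],
   whose derivative is nonpositive on [0, 1] by the Lipschitz bound on [grad f]. *)
Lemma smooth_descent f (L : R) x y : 0 < L -> smooth L f ->
  f y <= f x + dot (grad f x) (y - x) + L / 2 * sqnorm (y - x).
Proof.
move=> L0 [df lip]; set v := y - x.
set A := dot (grad f x) v; set B := L / 2 * sqnorm v.
pose H := (fun s => f (s *: v + x)) - (@idfun R * cst A) - (cst B * (@idfun R * @idfun R)).
pose dH := fun s : R => 'd f (s *: v + x) v - A - B * (s + s).
have derH (s : R) : is_derive s 1 H (dH s).
  apply: is_derive_eq.
    by apply: is_deriveB; first apply: is_deriveB; exact: is_derive_line.
  by rewrite /dH /= !scaler0 !add0r !addr0 /cst /= ![_%:A]mulr1 diff_grad.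
have contH : {within `[0, 1], continuous H}%classic.
  by apply: derivable_within_continuous => s _; exact: (@ex_derive _ _ _ _ _ _ _ (derH s)).
have [s s01 mvt] := MVT ltr01 (fun s _ => derH s) contH.
have s0 : 0 < s by move: s01; rewrite in_itv => /andP[].
have dHs_le0 : dH s <= 0.
  have lipv : dot (grad f (s *: v + x) - grad f x) v <= (L * s) * sqnorm v.
    apply: dot_le_of_sqnorm; first exact: mulr_gt0.
    have := sqnorm_le_of_enorm (ltW L0) (lip (s *: v + x) x).
    by rewrite addrK sqnormZ exprMn mulrA.
  rewrite /dH; have -> : 'd f (s *: v + x) v - A = dot (grad f (s *: v + x) - grad f x) v.
    by rewrite diff_grad dotBl.
  move: lipv; rewrite /B; lra.
have : H 1 <= H 0 by rewrite -subr_le0 mvt subr0 mulr1.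
have -> : H 1 = f (1 *: v + x) - 1 * A - B * (1 * 1) by [].
have -> : H 0 = f (0 *: v + x) - 0 * A - B * (0 * 0) by [].
rewrite scale1r scale0r add0r /v subrK; lra.
Qed.

Lemma convex_first_order f (mu : R) x y : 0 <= mu -> strongly_convex mu f ->
  (forall z, differentiable f z) -> f x + dot (grad f x) (y - x) <= f y.
Proof.
move=> mu0 cvx df; set v := y - x.
have hd : is_derive (0 : R) 1 (fun s => f (s *: v + x)) ('d f (0 *: v + x) v).
  exact: is_derive_line.
have dv := @derive_val _ _ _ _ _ _ _ hd; rewrite scale0r add0r diff_grad in dv.
have := cvg_dnbhs_at_right (@ex_derive _ _ _ _ _ _ _ hd); rewrite /derive in dv; rewrite dv.
rewrite -lerBrDl => /cvgr_to_le; apply; near=> h.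
have h0 : 0 < h by near: h; exact: nbhs_right_gt.
have h1 : h <= 1 by near: h; exact: nbhs_right_le.
rewrite /= /shift [h *: 1]mulr1 addr0 scale0r add0r.
have -> : h *: v + x = h *: y + (1 - h) *: x.
  by rewrite /v scalerBr scalerBl scale1r addrA addrAC addrC addrA.
have := cvx y x h; rewrite ltW //= h1 => hc.
have pen : 0 <= mu / 2 * h * (1 - h) * sqnorm (y - x).
  by rewrite !mulr_ge0 ?sqnorm_ge0 ?divr_ge0 ?subr_ge0 // ltW.
rewrite /GRing.scale /= mulrC ler_pdivrMr //; lra.
Unshelve. all: by end_near.
Qed.

(* Convexity at [x] and the descent lemma at [y], both evaluated at
   [z = y - (grad f y - grad f x) / L]. *)
Lemma smooth_convex_cocoercive f (mu L : R) x y :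
  0 <= mu -> 0 < L -> strongly_convex mu f -> smooth L f ->
  sqnorm (grad f y - grad f x) / (2 * L) <= f y - f x - dot (grad f x) (y - x).
Proof.
move=> mu0 L0 cvx sm; set g := grad f y - grad f x; set z := y - L^-1 *: g.
have hx := convex_first_order f mu x z mu0 cvx sm.1.
have hy := smooth_descent f L y z L0 sm.
have zx : z - x = (y - x) - L^-1 *: g by rewrite /z addrAC.
have zy : z - y = (- L^-1) *: g by rewrite /z addrC addKr scaleNr.
rewrite zx dotBr dotZr in hx; rewrite zy dotZr sqnormZ in hy.
have gE : L^-1 * sqnorm g = L^-1 * dot (grad f y) g - L^-1 * dot (grad f x) g.
  by rewrite sqnorm_dot {1}/g dotBl mulrBr.
have LE : L / 2 * ((- L^-1) ^+ 2 * sqnorm g) = L^-1 * sqnorm g / 2.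
  by rewrite sqrrN; field; rewrite gt_eqF.
have -> : sqnorm g / (2 * L) = L^-1 * sqnorm g / 2 by field; rewrite gt_eqF.
rewrite LE in hy.
move: hx hy gE; generalize (L^-1) (sqnorm g) (dot (grad f y) g) (dot (grad f x) g)
  (dot (grad f x) (y - x)) (f x) (f y) (f z) => *; lra.
Qed.

End SmoothConvex.

Lemma sum_ffun_prod_marginal {R : comNzRingType} (I : finType) (w : I -> bool -> R)
    (j0 : I) (h : bool -> R) :
  (forall j, w j true + w j false = 1) ->
  \sum_(xs : {ffun I -> bool}) (\prod_j w j (xs j)) * h (xs j0)
    = \sum_(b : bool) w j0 b * h b.
Proof.
move=> w1.
have prodE (xs : {ffun I -> bool}) : (\prod_j w j (xs j)) * h (xs j0)
    = \prod_j (w j (xs j) * (if j == j0 then h (xs j) else 1)).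
  rewrite big_split /=; congr (_ * _).
  by rewrite (bigD1 j0) //= eqxx big1 ?mulr1 // => j /negbTE ->.
rewrite (eq_bigr _ (fun xs _ => prodE xs)).
rewrite -(bigA_distr_bigA (fun j b => w j b * (if j == j0 then h b else 1))) /=.
rewrite (bigD1 j0) //= [X in _ * X]big1 ?mulr1 => [|j /negbTE jj0].
  by rewrite eqxx.
by rewrite big_bool jj0 !mulr1; exact: w1.
Qed.

(* Take [t = - S / (|C| + 1)] if [S < 0]. *)
Lemma ge0_of_quadratic_ge0 {R : realFieldType} (S C : R) :
  (forall t, 0 < t -> 0 <= t * S + t ^+ 2 * C) -> 0 <= S.
Proof.
move=> hq; rewrite leNgt; apply/negP => S_lt0.
have nC1 : 0 < `|C| + 1 by rewrite ltr_wpDl.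
set t := - S / (`|C| + 1).
have t_gt0 : 0 < t by rewrite divr_gt0 // oppr_gt0.
have : t * S + t ^+ 2 * C <= t * (S / (`|C| + 1)).
  have -> : t * (S / (`|C| + 1)) = t * S + t ^+ 2 * `|C|.
    by rewrite /t; field; rewrite gt_eqF.
  by rewrite lerD2l ler_wpM2l ?sqr_ge0 ?ler_norm.
have : t * (S / (`|C| + 1)) < 0 by rewrite pmulr_rlt0 // pmulr_llt0 ?invr_gt0.
have := hq t t_gt0; lra.
Qed.

Lemma scaled_sum_segment {R : comNzRingType} {m : nat} (I : Type) (r : seq I) (P : pred I)
    (s : R) (w : I -> R) (A B : I -> 'rV[R]_m) (t : R) :
  s *: \sum_(i <- r | P i) w i *: (A i + t *: (B i - A i))
    = s *: \sum_(i <- r | P i) w i *: A i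
      + t *: (s *: \sum_(i <- r | P i) w i *: B i - s *: \sum_(i <- r | P i) w i *: A i).
Proof.
have -> : \sum_(i <- r | P i) w i *: (A i + t *: (B i - A i))
    = \sum_(i <- r | P i) (w i *: A i + t *: (w i *: B i - w i *: A i)).
  by apply: eq_bigr => i _; apply/rowP => j; rewrite !mxE; ring.
rewrite big_split /= -scaler_sumr sumrB.
by apply/rowP => j; rewrite !mxE; ring.
Qed.

Definition segment {R : ringType} {I : Type} {m : nat} (A B : I -> 'rV[R]_m) (t : R) i :=
  A i + t *: (B i - A i).

Section ClusterPenalty.
Context {R : realType} {n k d : nat}.
Variables (c : 'I_n -> 'I_k) (gamma : 'I_n -> R) (alpha : 'I_k -> R).
Implicit Types (Th Thhat : 'I_n -> 'rV[R]_d).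

Definition cluster_dev Th i := Th i - cluster_mean c gamma Th (c i).
Definition global_dev Th i := Th i - global_mean c gamma alpha Th.
Definition cluster_coef i := (1 - alpha (c i)) * gamma i / 2.
Definition global_coef i := alpha (c i) * gamma i / 2.

Lemma cluster_dev_segment Thhat Th t i :
  cluster_dev (segment Thhat Th t) i
    = cluster_dev Thhat i + t *: (cluster_dev Th i - cluster_dev Thhat i).
Proof.
rewrite /cluster_dev /cluster_mean /segment scaled_sum_segment.
by apply/rowP => j; rewrite !mxE; ring.
Qed.

Lemma global_dev_segment Thhat Th t i :
  global_dev (segment Thhat Th t) i
    = global_dev Thhat i + t *: (global_dev Th i - global_dev Thhat i).
Proof.
rewrite /global_dev /global_mean /segment scaled_sum_segment.
by apply/rowP => j; rewrite !mxE; ring.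
Qed.

Lemma objFE f Th : objF c gamma alpha f Th = \sum_(i < n) (f i (Th i)
  + cluster_coef i * sqnorm (cluster_dev Th i) + global_coef i * sqnorm (global_dev Th i)).
Proof. by []. Qed.

End ClusterPenalty.

Section ObjectiveGap.
Context {R : realType} {n k d : nat}.
Variables (c : 'I_n -> 'I_k) (gamma : 'I_n -> R) (alpha : 'I_k -> R).
Variables (f : 'I_n -> 'rV[R]_d -> R) (mu L : R).
Hypotheses (mu_ge0 : 0 <= mu) (L_gt0 : 0 < L).
Hypotheses (cvx : forall i, strongly_convex mu (f i)) (sm : forall i, smooth L (f i)).
Variables (Thhat Th : 'I_n -> 'rV[R]_d).

Local Notation F := (objF c gamma alpha f).
Local Notation cc := (cluster_coef c gamma alpha).
Local Notation gc := (global_coef c gamma alpha).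
Local Notation a1 i := (cluster_dev c gamma Thhat i).
Local Notation a2 i := (global_dev c gamma alpha Thhat i).
Local Notation u i := (cluster_dev c gamma Th i - cluster_dev c gamma Thhat i).
Local Notation w i := (global_dev c gamma alpha Th i - global_dev c gamma alpha Thhat i).

Definition objF_slope := \sum_(i < n) (dot (grad (f i) (Thhat i)) (Th i - Thhat i)
  + cc i * (2 * dot (a1 i) (u i)) + gc i * (2 * dot (a2 i) (w i))).

Definition client_gap i := sqnorm (grad (f i) (Th i) - grad (f i) (Thhat i)) / (2 * L)
  + cc i * sqnorm (u i) + gc i * sqnorm (w i).

Lemma objF_segment_le : exists C, forall t,
  F (segment Thhat Th t) <= F Thhat + t * objF_slope + t ^+ 2 * C.
Proof.
exists (\sum_(i < n) (L / 2 * sqnorm (Th i - Thhat i) + cc i * sqnorm (u i)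
                      + gc i * sqnorm (w i))) => t.
rewrite !objFE /objF_slope !mulr_sumr -!big_split /=; apply: ler_sum => i _.
rewrite cluster_dev_segment global_dev_segment (sqnormD (a1 i)) (sqnormD (a2 i)).
rewrite !dotZr !sqnormZ.
have := smooth_descent (f i) L (Thhat i) (segment Thhat Th t i) L_gt0 (sm i).
have -> : segment Thhat Th t i - Thhat i = t *: (Th i - Thhat i).
  by rewrite /segment addrAC subrr add0r.
rewrite dotZr sqnormZ.
generalize (f i (segment Thhat Th t i)) (f i (Thhat i)) => *; lra.
Qed.

Lemma objF_slope_ge0 : (forall Th', F Thhat <= F Th') -> 0 <= objF_slope.
Proof.
move=> Thhat_min; have [C segC] := objF_segment_le.
apply: (@ge0_of_quadratic_ge0 _ _ C) => t _.
have := segC t; have := Thhat_min (segment Thhat Th t); lra.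
Qed.

Lemma objF_gap_ge : \sum_(i < n) client_gap i + objF_slope <= F Th - F Thhat.
Proof.
rewrite !objFE /objF_slope /client_gap -big_split -sumrB /=; apply: ler_sum => i _.
set U := u i; set W := w i.
rewrite (_ : cluster_dev c gamma Th i = a1 i + U); last by rewrite /U addrC subrK.
rewrite (_ : global_dev c gamma alpha Th i = a2 i + W); last by rewrite /W addrC subrK.
rewrite (sqnormD (a1 i) U) (sqnormD (a2 i) W).
have := smooth_convex_cocoercive (f i) mu L (Thhat i) (Th i) mu_ge0 L_gt0 (cvx i) (sm i).
generalize (sqnorm (grad (f i) (Th i) - grad (f i) (Thhat i)) / (2 * L))
  (f i (Th i)) (f i (Thhat i)) => *; lra.
Qed.

Lemma sum_client_gap_le : (forall Th', F Thhat <= F Th') ->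
  \sum_(i < n) client_gap i <= F Th - F Thhat.
Proof. by move=> /objF_slope_ge0; have := objF_gap_ge; lra. Qed.

End ObjectiveGap.

Definition bern_weight {R : ringType} (q : R) (b : bool) : R := if b then q else 1 - q.

Section OracleVariance.
Context {R : realType} {n k d : nat}.
Variables (c : 'I_n -> 'I_k) (gamma : 'I_n -> R) (alpha : 'I_k -> R).
Variables (p0 : R) (p tau : 'I_k -> R) (f : 'I_n -> 'rV[R]_d -> R).

Local Notation G := (oracle c gamma alpha p0 p tau f).

Lemma oracle_local xi0 xs Th i : G xi0 xs Th i = G xi0 [ffun=> xs (c i)] Th i.
Proof. by rewrite /oracle ffunE. Qed.

Lemma expected_sqdiffE Th Thhat :
  expected_sqdiff c gamma alpha p0 p tau f Th Thhat
  = \sum_(i < n) \sum_(b0 : bool) bern_weight p0 b0 * \sum_(b : bool)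
      bern_weight (p (c i)) b * sqnorm (G b0 [ffun=> b] Th i - G b0 [ffun=> b] Thhat i).
Proof.
rewrite /expected_sqdiff /xi_prob.
under eq_bigr => b0 _ do under eq_bigr => xs _ do rewrite mulr_sumr.
under eq_bigr => b0 _ do rewrite exchange_big.
rewrite exchange_big; apply: eq_bigr => i _; apply: eq_bigr => b0 _.
under eq_bigr => xs _ do rewrite -mulrA (oracle_local _ _ Th) (oracle_local _ _ Thhat).
rewrite -mulr_sumr; congr (_ * _).
rewrite (sum_ffun_prod_marginal _ (fun j => bern_weight (p j)) (c i)
  (fun b => sqnorm (G b0 [ffun=> b] Th i - G b0 [ffun=> b] Thhat i))) //.
by move=> j; rewrite /bern_weight addrC subrK.
Qed.

Variables (L : R) (Th Thhat : 'I_n -> 'rV[R]_d).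
Hypotheses (p0_01 : 0 < p0 < 1) (p_01 : forall j, 0 < p j < 1).
Hypotheses (tauE : forall j, tau j = p0 / (p0 + 2 * (1 - p0) * p j)).
Hypotheses (alpha_01 : forall j, 0 <= alpha j <= 1) (gamma_gt0 : forall i, 0 < gamma i).
Hypothesis L_gt0 : 0 < L.

Local Notation calL := (calL c gamma alpha p0 p L).

Lemma calL_ge_global i : 2 / p0 * (alpha (c i) * gamma i) <= calL.
Proof.
have [p0_gt0 _] := andP p0_01.
rewrite /calL !le_max; apply/orP; left; apply/orP; left.
by rewrite ler_pM2l ?divr_gt0 //; exact: (le_bigmax 0 (fun i => alpha (c i) * gamma i)).
Qed.

Lemma calL_ge_cluster i :
  2 * (1 - alpha (c i)) * gamma i / (p0 + 2 * (1 - p0) * p (c i)) <= calL.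
Proof.
have [p0_gt0 p0_lt1] := andP p0_01; have [pj_gt0 _] := andP (p_01 (c i)).
have [_ a_le1] := andP (alpha_01 (c i)).
rewrite /calL !le_max; apply/orP; left; apply/orP; right.
apply: le_trans (le_bigmax 0 (fun j => 2 * (1 - alpha j)
  * \big[Num.max/0]_(i < n | c i == j) gamma i / (p0 + 2 * (1 - p0) * p j)) (c i)).
apply: ler_wpM2r; first by rewrite invr_ge0 addr_ge0 ?mulr_ge0 ?subr_ge0 ?ltW.
apply: ler_wpM2l; first by rewrite mulr_ge0 ?subr_ge0.
exact: (@le_bigmax_cond _ _ _ 0 i (fun i' => c i' == c i) gamma (eqxx _)).
Qed.

Lemma calL_ge_grad j : L / (1 - p0) * (1 - p j)^-1 <= calL.
Proof.
have [_ p0_lt1] := andP p0_01.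
rewrite /calL !le_max; apply/orP; right.
apply: ler_wpM2l; first by rewrite divr_ge0 ?subr_ge0 ?ltW.
exact: (le_bigmax 0 (fun j => (1 - p j)^-1)).
Qed.

Lemma calL_ge0 : 0 <= calL.
Proof.
have [_ p0_lt1] := andP p0_01.
rewrite /calL !le_max; apply/orP; right.
apply: mulr_ge0; first by rewrite divr_ge0 ?subr_ge0 ?ltW.
exact: bigmax_ge_id.
Qed.

Lemma client_weights_le i (U W D : R) : 0 <= U -> 0 <= W -> 0 <= D ->
  p0 * (2 * ((gamma i * alpha (c i) / p0) ^+ 2 * W)
        + 2 * ((gamma i * tau (c i) * (1 - alpha (c i)) / p0) ^+ 2 * U))
  + (1 - p0) * (p (c i) * ((gamma i * (1 - tau (c i)) * (1 - alpha (c i))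
                            / ((1 - p0) * p (c i))) ^+ 2 * U)
                + (1 - p (c i)) * (((1 - p0) * (1 - p (c i)))^-1 ^+ 2 * D))
  <= 2 * calL * (D / (2 * L) + cluster_coef c gamma alpha i * U
                 + global_coef c gamma alpha i * W).
Proof.
move=> U_ge0 W_ge0 D_ge0.
have [p0_gt0 p0_lt1] := andP p0_01; have [q_gt0 q_lt1] := andP (p_01 (c i)).
have [a_ge0 a_le1] := andP (alpha_01 (c i)); have g_gt0 := gamma_gt0 i.
rewrite /cluster_coef /global_coef tauE.
set a := alpha (c i); set g := gamma i; set q := p (c i).
have den_gt0 : 0 < p0 + 2 * (1 - p0) * q.
  by rewrite ltr_wpDr // mulr_ge0 ?mulr_ge0 ?subr_ge0 ?ltW.
have globalE : p0 * (2 * ((g * a / p0) ^+ 2 * W)) = 2 / p0 * (a * g) * (a * g * W).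
  by field; rewrite gt_eqF.
(* [tau] is the minimiser of [2 tau^2 / p0 + (1 - tau)^2 / ((1 - p0) q)], with minimum
   [2 / (p0 + 2 (1 - p0) q)]. *)
have clusterE : p0 * (2 * ((g * (p0 / (p0 + 2 * (1 - p0) * q)) * (1 - a) / p0) ^+ 2 * U))
    + (1 - p0) * (q * ((g * (1 - p0 / (p0 + 2 * (1 - p0) * q)) * (1 - a)
                        / ((1 - p0) * q)) ^+ 2 * U))
  = 2 * (1 - a) * g / (p0 + 2 * (1 - p0) * q) * ((1 - a) * g * U).
  by field; rewrite !gt_eqF ?subr_gt0.
have gradE : (1 - p0) * ((1 - q) * (((1 - p0) * (1 - q))^-1 ^+ 2 * D))
    = L / (1 - p0) * (1 - q)^-1 * (D / L).
  by field; rewrite !gt_eqF ?subr_gt0.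
have a1_ge0 : 0 <= 1 - a by rewrite subr_ge0.
have globalB := ler_wpM2r (mulr_ge0 (mulr_ge0 a_ge0 (ltW g_gt0)) W_ge0) (calL_ge_global i).
have clusterB := ler_wpM2r (mulr_ge0 (mulr_ge0 a1_ge0 (ltW g_gt0)) U_ge0)
  (calL_ge_cluster i).
have gradB := ler_wpM2r (divr_ge0 D_ge0 (ltW L_gt0)) (calL_ge_grad (c i)).
have -> : 2 * calL * (D / (2 * L) + (1 - a) * g / 2 * U + a * g / 2 * W)
    = calL * (a * g * W) + calL * ((1 - a) * g * U) + calL * (D / L).
  by field; rewrite gt_eqF.
move: globalB clusterB gradB; rewrite -/a -/g -globalE -clusterE -gradE; lra.
Qed.

Lemma client_sqdiff_le i :
  \sum_(b0 : bool) bern_weight p0 b0 * \sum_(b : bool) bern_weight (p (c i)) b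
      * sqnorm (G b0 [ffun=> b] Th i - G b0 [ffun=> b] Thhat i)
  <= 2 * calL * client_gap c gamma alpha f L Thhat Th i.
Proof.
have [p0_gt0 _] := andP p0_01; have [q_gt0 q_lt1] := andP (p_01 (c i)).
apply: le_trans (client_weights_le i _ _ _ (sqnorm_ge0 _) (sqnorm_ge0 _) (sqnorm_ge0 _)) => /=.
have sqdiff_global b : sqnorm (G true [ffun=> b] Th i - G true [ffun=> b] Thhat i)
  <= 2 * ((gamma i * alpha (c i) / p0) ^+ 2
          * sqnorm (global_dev c gamma alpha Th i - global_dev c gamma alpha Thhat i))
     + 2 * ((gamma i * tau (c i) * (1 - alpha (c i)) / p0) ^+ 2
          * sqnorm (cluster_dev c gamma Th i - cluster_dev c gamma Thhat i)).
  rewrite /oracle /= opprD addrACA -!scalerBr.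
  by apply: le_trans (sqnormD_le _ _) _; rewrite !sqnormZ.
have sqdiff_cluster : sqnorm (G false [ffun=> true] Th i - G false [ffun=> true] Thhat i)
  = (gamma i * (1 - tau (c i)) * (1 - alpha (c i)) / ((1 - p0) * p (c i))) ^+ 2
    * sqnorm (cluster_dev c gamma Th i - cluster_dev c gamma Thhat i).
  by rewrite /oracle /= ffunE -scalerBr sqnormZ.
have sqdiff_local : sqnorm (G false [ffun=> false] Th i - G false [ffun=> false] Thhat i)
  = ((1 - p0) * (1 - p (c i)))^-1 ^+ 2 * sqnorm (grad (f i) (Th i) - grad (f i) (Thhat i)).
  by rewrite /oracle /= ffunE -scalerBr sqnormZ.
rewrite !big_bool sqdiff_cluster sqdiff_local /bern_weight /= lerD2r.
apply: ler_wpM2l; first exact: ltW.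
apply: le_trans (lerD (ler_wpM2l (ltW q_gt0) (sqdiff_global true))
                      (ler_wpM2l _ (sqdiff_global false))) _; first by rewrite subr_ge0 ltW.
by rewrite -mulrDl addrC subrK mul1r.
Qed.

End OracleVariance.

Theorem mainTheorem6 (R : realType) (n k d : nat) (c : 'I_n -> 'I_k)
    (f : 'I_n -> 'rV[R]_d -> R) (mu L : R) (gamma : 'I_n -> R) (alpha : 'I_k -> R)
    (p0 : R) (p tau : 'I_k -> R) (Thhat : 'I_n -> 'rV[R]_d) :
  (0 < d)%N ->
  (forall j : 'I_k, exists i : 'I_n, c i = j) ->
  0 < mu -> mu <= L ->
  (forall i, strongly_convex mu (f i)) ->
  (forall i, smooth L (f i)) ->
  (forall i, 0 < gamma i) ->
  (forall j, 0 <= alpha j <= 1) ->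
  (exists j, alpha j != 0) ->
  0 < p0 < 1 ->
  (forall j, 0 < p j < 1) ->
  (forall j, tau j = p0 / (p0 + 2 * (1 - p0) * p j)) ->
  (forall Th, objF c gamma alpha f Thhat <= objF c gamma alpha f Th) ->
  forall Th : 'I_n -> 'rV[R]_d,
    expected_sqdiff c gamma alpha p0 p tau f Th Thhat
      <= 2 * calL c gamma alpha p0 p L *
           (objF c gamma alpha f Th - objF c gamma alpha f Thhat).
Proof.
move=> _ _ mu_gt0 muL cvx sm gamma_gt0 alpha_01 _ p0_01 p_01 tauE Thhat_min Th.
have L_gt0 : 0 < L := lt_le_trans mu_gt0 muL.
rewrite expected_sqdiffE.
apply: le_trans (_ : \sum_(i < n) 2 * calL c gamma alpha p0 p L
                       * client_gap c gamma alpha f L Thhat Th i <= _).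
  by apply: ler_sum => i _; exact: client_sqdiff_le.
rewrite -mulr_sumr; apply: ler_wpM2l; first by rewrite mulr_ge0 ?calL_ge0.
exact: (@sum_client_gap_le _ _ _ _ c gamma alpha f mu L (ltW mu_gt0) L_gt0 cvx sm).
Qed.
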